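(* Let $k$ be a positive integer, $a\ge k+2$ an integer and $G=K_a\,\square\,K_a$. Then $\gamma_{P,k}(G/e)=a-k-1$ for every edge $e$ of $G$.
   Context: $K_a$ is the complete graph on $a$ vertices and $\square$ denotes the Cartesian product of graphs. For an edge $e=xy$, the contraction $G/e$ is obtained from $G-e$ by replacing $x$ and $y$ by a new vertex $v_{xy}$ adjacent to all vertices of $N_{G-e}(x)\cup N_{G-e}(y)$ (other than $x,y$). $N_G[v]$ is the closed neighbourhood of $v$, and $N_G[S]$ the union of closed neighbourhoods of vertices of $S$. For $S\subseteq V(G)$, define $\mathcal{P}^{0}_{G,k}(S)=N_G[S]$ and $\mathcal{P}^{i+1}_{G,k}(S)=\bigcup\{N_G[v] : v\in \mathcal{P}^{i}_{G,k}(S),\ |N_G[v]\setminus \mathcal{P}^{i}_{G,k}(S)|\le k\}$; these increase and stabilize to $\mathcal{P}^{\infty}_{G,k}(S)$. $S$ is a $k$-power dominating set if $\mathcal{P}^{\infty}_{G,k}(S)=V(G)$; $\gamma_{P,k}(G)$ is the minimum size of such a set. *)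

From mathcomp Require Import all_boot all_order.
Set Implicit Arguments. Unset Strict Implicit. Unset Printing Implicit Defensive.

Section PowerDom.
Variables (T : finType) (adj : rel T).

Definition cnbh (v : T) : {set T} := [set u | (u == v) || adj v u].
Definition cnbhS (S : {set T}) : {set T} := \bigcup_(v in S) cnbh v.

Definition pstep (k : nat) (P : {set T}) : {set T} :=
  \bigcup_(v in P | #|cnbh v :\: P| <= k) cnbh v.

Definition pdom (k : nat) (S : {set T}) (i : nat) : {set T} :=
  iter i (pstep k) (cnbhS S).

Definition kpds (k : nat) (S : {set T}) : Prop :=
  exists i, pdom k S i = [set: T].

Definition is_gammaPk (k n : nat) : Prop :=
  (exists S : {set T}, kpds k S /\ #|S| = n) /\
  (forall S : {set T}, kpds k S -> n <= #|S|).
End PowerDom.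

Definition KaKa_adj (a : nat) : rel ('I_a * 'I_a) :=
  fun u w => ((u.1 == w.1) && (u.2 != w.2)) || ((u.2 == w.2) && (u.1 != w.1)).

(* Contraction G/e of the edge xy: vertices of G other than x,y (Some _),
   plus the new vertex v_xy (None). *)
Section Contraction.
Variables (T : finType) (adj : rel T) (x y : T).
Definition cvert := option {v : T | (v != x) && (v != y)}.
Definition contract_adj : rel cvert :=
  fun u w => match u, w with
  | Some u', Some w' => adj (val u') (val w')
  | None, Some w' => adj x (val w') || adj y (val w')
  | Some u', None => adj (val u') x || adj (val u') y
  | None, None => false
  end.
End Contraction.
Arguments contract_adj {T} adj x y.

From mathcomp Require Import all_boot all_order zify.
Set Implicit Arguments. Unset Strict Implicit. Unset Printing Implicit Defensive.

(* View the vertices of K_a □ K_a as the cells (row, column) of an a x a board,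
   closed neighbourhoods being unions of a row and a column, and let the
   contracted edge lie in a row.
   Upper bound: the merged vertex together with a-k-2 cells of another row,
   placed in columns other than those of x and y, observes the row of x and all
   but k columns; every cell of the column of x then has at most k unobserved
   neighbours, so one propagation step observes everything.
   Lower bound: if |S| <= a-k-2, collect the rows and columns met by S (the
   merged vertex meets both columns of x and y).  Fewer than a rows and fewer
   than a columns are met, and the union of these lines is closed under
   propagation, because every row or column outside it contains more than k
   vertices outside it. *)

Section PowerDomination.
Variables (T : finType) (adj : rel T) (k : nat).

Lemma pstepS (P P' : {set T}) : P \subset P' -> pstep adj k P \subset pstep adj k P'.
Proof.
move=> sPP'; apply/bigcupsP => v /andP [vP small].
apply: (bigcup_sup v); rewrite (subsetP sPP') //=.
by apply: leq_trans small; apply/subset_leq_card/setDS.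
Qed.

Lemma pstep_closed (Q : {set T}) :
  (forall v, v \in Q -> #|cnbh adj v :\: Q| <= k -> cnbh adj v \subset Q) ->
  pstep adj k Q \subset Q.
Proof. by move=> closedQ; apply/bigcupsP => v /andP []; apply: closedQ. Qed.

Lemma pdom_closed (S Q : {set T}) i :
  cnbhS adj S \subset Q -> pstep adj k Q \subset Q -> pdom adj k S i \subset Q.
Proof.
move=> sSQ closedQ; elim: i => [|i IH] //=.
exact: subset_trans (pstepS IH) closedQ.
Qed.

Lemma cnbh_pstep (P : {set T}) v :
  v \in P -> #|cnbh adj v :\: P| <= k -> cnbh adj v \subset pstep adj k P.
Proof. by move=> vP small; apply: bigcup_sup; rewrite vP. Qed.

Lemma not_kpds_closed (S Q : {set T}) v :
  cnbhS adj S \subset Q -> pstep adj k Q \subset Q -> v \notin Q -> ~ kpds adj k S.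
Proof.
move=> sSQ closedQ vQ [i domS]; move: (pdom_closed i sSQ closedQ).
by rewrite domS => /subsetP /(_ v (in_setT v)); apply/negP.
Qed.

End PowerDomination.

Lemma exists_notin (T : finType) (A : {set T}) : #|A| < #|T| -> exists t, t \notin A.
Proof.
move=> ltAT; have /set0Pn [t] : ~: A != set0 by rewrite -card_gt0 cardsCs setCK; lia.
by rewrite inE; exists t.
Qed.

Lemma exists_subset_card (T : finType) (B : {set T}) n :
  n <= #|B| -> exists J : {set T}, J \subset B /\ #|J| = n.
Proof.
move=> le_nB; exists [set j in take n (enum B)]; split.
  by apply/subsetP => j; rewrite inE => /mem_take; rewrite mem_enum.
rewrite cardsE; move/card_uniqP: (take_uniq n (enum_uniq (mem B))) => ->.
by rewrite size_takel // -cardE.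
Qed.

Section ContractionMap.
Variables (T : finType) (adj : rel T) (x y : T).
Local Notation xy := [set x; y].
Local Notation cadj := (contract_adj adj x y).
Local Notation sub := {v : T | (v != x) && (v != y)}.

Definition contract (t : T) : cvert x y := insub t.

Lemma contract_val s : contract (val s) = Some s.
Proof. exact: valK. Qed.

Lemma contract_xy t : t \in xy -> contract t = None.
Proof. by move=> txy; rewrite /contract insubN // negb_and !negbK -in_set2. Qed.

Lemma contract_nxy t : t \notin xy ->
  exists2 s, contract t = Some s & val s = t.
Proof.
rewrite in_set2 negb_or => txy.
by exists (Sub t txy); rewrite /contract ?insubT.
Qed.

Lemma val_nxy (s : sub) : val s \notin xy.
Proof. by rewrite in_set2 negb_or; exact: (valP s). Qed.

Lemma contract_surj (u : cvert x y) : exists t, u = contract t.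
Proof.
case: u => [s|]; first by exists (val s); rewrite contract_val.
by exists x; rewrite contract_xy // set21.
Qed.

Lemma contract_inj t t' : t \notin xy -> contract t = contract t' -> t = t'.
Proof.
move=> txy; have [s -> <-] := contract_nxy txy.
have [t'xy | t'xy] := boolP (t' \in xy); first by rewrite contract_xy.
by have [s' -> <-] := contract_nxy t'xy => -[->].
Qed.

Lemma mem_contract_Some s (A : {set T}) : (Some s \in contract @: A) = (val s \in A).
Proof.
apply/imsetP/idP => [[t tA]|sA]; last by exists (val s); rewrite ?contract_val.
by rewrite -contract_val => /(contract_inj (val_nxy s)) ->.
Qed.

Lemma mem_contract_None (A : {set T}) : (None \in contract @: A) = (x \in A) || (y \in A).
Proof.
apply/imsetP/orP => [[t tA eN]|].
  have [txy|txy] := boolP (t \in xy); last by have [s e] := contract_nxy txy; rewrite e in eN.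
  by move: txy tA; rewrite in_set2 => /orP [] /eqP ->; [left | right].
by case=> [xA | yA]; [exists x | exists y]; rewrite // contract_xy // in_set2 eqxx ?orbT.
Qed.

Lemma contract_notin t (A : {set T}) :
  t \notin A -> t \notin xy -> contract t \notin contract @: A.
Proof. by move=> tA /contract_nxy [s -> st]; rewrite mem_contract_Some st. Qed.

Lemma cnbh_contract t :
  cnbh cadj (contract t) =
  contract @: (if t \in xy then cnbh adj x :|: cnbh adj y else cnbh adj t).
Proof.
have [txy|txy] := boolP (t \in xy).
  rewrite contract_xy //; apply/setP => -[s|]; rewrite inE /=.
    have /andP [sx sy] := valP s.
    by rewrite mem_contract_Some !inE (negbTE sx) (negbTE sy).
  by rewrite mem_contract_None !inE !eqxx.
have [s -> <-] := contract_nxy txy; apply/setP => -[s'|]; rewrite inE /=.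
  by rewrite mem_contract_Some inE val_eqE.
have /andP [sx sy] := valP s.
by rewrite mem_contract_None !inE ![_ == val s]eq_sym (negbTE sx) (negbTE sy).
Qed.

Lemma card_contract_diff_nxy (A B : {set T}) :
  #|A :\: B :\: xy| <= #|contract @: A :\: contract @: B|.
Proof.
rewrite -(@card_in_imset _ _ contract); last first.
  by move=> t t'; rewrite inE => /andP [txy _] _; apply: contract_inj.
apply/subset_leq_card/subsetP => _ /imsetP [t + ->].
rewrite !in_setD => /andP [txy /andP [tB tA]].
by rewrite (contract_notin tB txy) imset_f.
Qed.

(* Contraction merges only x and y, and when both survive in A :\: B their
   image None survives too; hence at most one vertex is lost. *)
Lemma card_contract_diff (A B : {set T}) :
  #|A :\: B| <= (#|contract @: A :\: contract @: B|).+1.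
Proof.
set C := A :\: B; rewrite -(cardsID xy C).
have card_xy : #|xy| <= 2 by rewrite cards2; case: (_ != _).
have [sxyC | nsxyC] := boolP (xy \subset C).
  have [xC yC] : x \in C /\ y \in C by rewrite !(subsetP sxyC) ?set21 ?set22.
  have sub : None |: contract @: (C :\: xy) \subset contract @: A :\: contract @: B.
    apply/subsetP => u; rewrite in_setU1 => /orP [/eqP -> | /imsetP [t + ->]].
      move: xC yC; rewrite in_setD !mem_contract_None !in_setD.
      by case/andP => /negbTE -> -> /andP [/negbTE -> ->].
    rewrite !in_setD => /andP [txy /andP [tB tA]].
    by rewrite (contract_notin tB txy) imset_f.
  have := subset_leq_card sub; rewrite cardsU1 card_in_imset; last first.
    by move=> t t'; rewrite inE => /andP [txy _] _; apply: contract_inj.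
  have -> : None \notin contract @: (C :\: xy).
    by rewrite mem_contract_None !in_setD !set21 !set22.
  have := subset_leq_card (subsetIr C xy); lia.
have : #|C :&: xy| < #|xy|.
  apply: proper_card; rewrite properEneq subsetIr andbT.
  by apply: contraNneq nsxyC => <-; apply: subsetIl.
have := card_contract_diff_nxy A B; rewrite -/C; lia.
Qed.

End ContractionMap.

(* [tr] transposes the board, so that the contracted edge may be taken inside a row. *)
Section Rook.
Variables (a k : nat) (tr : bool).
Local Notation V := ('I_a * 'I_a)%type.
Local Notation G := (@KaKa_adj a).

Definition row (t : V) : 'I_a := if tr then t.2 else t.1.
Definition col (t : V) : 'I_a := if tr then t.1 else t.2.
Definition cell (i j : 'I_a) : V := if tr then (j, i) else (i, j).
Definition rowset (i : 'I_a) : {set V} := [set t | row t == i].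
Definition colset (j : 'I_a) : {set V} := [set t | col t == j].

Lemma row_cell i j : row (cell i j) = i. Proof. by rewrite /row /cell; case: tr. Qed.
Lemma col_cell i j : col (cell i j) = j. Proof. by rewrite /col /cell; case: tr. Qed.
Lemma cellK t : cell (row t) (col t) = t.
Proof. by rewrite /row /col /cell; case: tr; case: t. Qed.

Lemma cnbh_rook t : cnbh G t = rowset (row t) :|: colset (col t).
Proof.
apply/setP => -[u1 u2]; case: t => t1 t2; rewrite !inE /KaKa_adj /row /col /=.
rewrite xpair_eqE [t1 == _]eq_sym [t2 == _]eq_sym.
by case: tr; case: (u1 == t1); case: (u2 == t2).
Qed.

Lemma card_row_cells i (J : {set 'I_a}) :
  #|[set t | (row t == i) && (col t \in J)]| = #|J|.
Proof.
rewrite -(card_imset _ (can_inj (col_cell i))); congr #|pred_of_set _|.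
apply/setP => t; rewrite inE; apply/andP/imsetP => [[/eqP <- tJ] | [j jJ ->]].
  by exists (col t); rewrite ?cellK.
by rewrite row_cell col_cell.
Qed.

Lemma card_col_cells j (I : {set 'I_a}) :
  #|[set t | (col t == j) && (row t \in I)]| = #|I|.
Proof.
rewrite -(card_imset _ (can_inj (row_cell^~ j))); congr #|pred_of_set _|.
apply/setP => t; rewrite inE; apply/andP/imsetP => [[/eqP <- tI] | [i iI ->]].
  by exists (row t); rewrite ?cellK.
by rewrite row_cell col_cell.
Qed.

Lemma cardC_ord (A : {set 'I_a}) : #|~: A| = a - #|A|.
Proof. by rewrite cardsCs setCK card_ord. Qed.

Variables (x y : V).
Hypotheses (row_xy : row x = row y) (col_xy : col x != col y).
Local Notation xy := [set x; y].
Local Notation cadj := (contract_adj G x y).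
Local Notation contract := (@contract _ x y).

Lemma cell_nxy i j : i != row x -> cell i j \notin xy.
Proof.
move=> ix; rewrite in_set2 negb_or; apply/andP; split.
  by apply: contraNneq ix => <-; rewrite row_cell.
by rewrite row_xy in ix; apply: contraNneq ix => <-; rewrite row_cell.
Qed.

Lemma cnbh_contractN :
  cnbh cadj None = contract @: (rowset (row x) :|: colset (col x) :|: colset (col y)).
Proof.
rewrite -(contract_xy (set21 x y)) cnbh_contract set21 !cnbh_rook -row_xy.
by rewrite setUACA setUid setUA.
Qed.

Lemma cnbh_contract_rook t : t \notin xy ->
  cnbh cadj (contract t) = contract @: (rowset (row t) :|: colset (col t)).
Proof. by move=> txy; rewrite cnbh_contract (negbTE txy) cnbh_rook. Qed.

Section LowerBound.
Variable S : {set cvert x y}.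
Hypothesis small_S : #|S| < a - k - 1.

(* The merged vertex lies in the row of x and in the columns of x and y. *)
Definition vrow (u : cvert x y) : 'I_a := if u is Some s then row (val s) else row x.
Definition vcol (u : cvert x y) : 'I_a := if u is Some s then col (val s) else col x.
Definition hit_rows : {set 'I_a} := vrow @: S.
Definition hit_cols : {set 'I_a} :=
  vcol @: S :|: (if None \in S then [set col y] else set0).
Definition hit_lines : {set V} := [set t | (row t \in hit_rows) || (col t \in hit_cols)].
Definition hit : {set cvert x y} := contract @: hit_lines.

Lemma card_hit_rows : #|hit_rows| + k + 2 <= a.
Proof.
have : #|hit_rows| <= #|S| := leq_imset_card vrow S.
(* [set] merges occurrences of #|S| that differ by convertible instances. *)
by move: small_S; set n := #|S|; lia.
Qed.

Lemma card_hit_cols : #|hit_cols| + (None \notin S) + k + 1 <= a.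
Proof.
have : #|hit_cols| <= #|vcol @: S| + #|if None \in S then [set col y] else set0|.
  exact: leq_card_setU.
have := leq_imset_card vcol S.
by case: (None \in S); rewrite ?cards1 ?cards0 /=; move: small_S; set n := #|S|; lia.
Qed.

Lemma rowset_hit i : i \in hit_rows -> rowset i \subset hit_lines.
Proof.
move=> iR; apply/subsetP => t; rewrite [t \in rowset i]inE => /eqP ti.
by rewrite [t \in hit_lines]inE ti iR.
Qed.

Lemma colset_hit j : j \in hit_cols -> colset j \subset hit_lines.
Proof.
move=> jC; apply/subsetP => t; rewrite [t \in colset j]inE => /eqP tj.
by rewrite [t \in hit_lines]inE tj jC orbT.
Qed.

Lemma cnbhS_hit : cnbhS cadj S \subset hit.
Proof.
apply/bigcupsP => -[s|] uS.
  rewrite -contract_val cnbh_contract_rook ?val_nxy //; apply: imsetS.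
  by rewrite subUset rowset_hit ?colset_hit ?inE ?(imset_f vrow uS) ?(imset_f vcol uS).
rewrite cnbh_contractN; apply: imsetS.
by rewrite !subUset rowset_hit ?colset_hit ?inE ?uS ?(imset_f vrow uS) ?(imset_f vcol uS)
  ?set11 ?orbT.
Qed.

Lemma row_unobserved i : i \notin hit_rows -> k < #|contract @: rowset i :\: hit|.
Proof.
rewrite /hit => iR; have card_unhit : #|rowset i :\: hit_lines| = a - #|hit_cols|.
  rewrite -cardC_ord -(card_row_cells i); congr #|pred_of_set _|; apply/setP => t.
  rewrite in_setD [t \in hit_lines]inE [t \in rowset i]inE [RHS]inE in_setC.
  by rewrite negb_or andbC; case: eqP => // ->; rewrite iR.
have [ix | ix] := eqVneq i (row x).
  have NS : None \notin S by apply: contra iR => NS; rewrite ix (imset_f vrow NS).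
  rewrite -ltnS; apply: leq_trans (card_contract_diff x y (rowset i) hit_lines).
  by rewrite card_unhit; have := card_hit_cols; rewrite NS; lia.
apply: leq_trans (card_contract_diff_nxy x y (rowset i) hit_lines).
suff -> : rowset i :\: hit_lines :\: xy = rowset i :\: hit_lines.
  by rewrite card_unhit; have := card_hit_cols; case: (None \notin S); lia.
apply/setDidPl; rewrite disjoint_subset; apply/subsetP => t.
rewrite !inE => /andP [_ /eqP rti]; apply: contra ix => /orP [] /eqP tE;
  by rewrite -rti tE ?row_xy.
Qed.

Lemma col_unobserved j : j \notin hit_cols -> k < #|contract @: colset j :\: hit|.
Proof.
rewrite /hit => jC; have card_unhit : #|colset j :\: hit_lines| = a - #|hit_rows|.
  rewrite -cardC_ord -(card_col_cells j); congr #|pred_of_set _|; apply/setP => t.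
  rewrite in_setD [t \in hit_lines]inE [t \in colset j]inE [RHS]inE in_setC.
  by rewrite negb_or andbC; case: eqP => // ->; rewrite jC andbT.
rewrite -ltnS; apply: leq_trans (card_contract_diff x y (colset j) hit_lines).
by rewrite card_unhit; have := card_hit_rows; lia.
Qed.

Lemma pstep_hit : pstep cadj k hit \subset hit.
Proof.
apply: pstep_closed => _ /imsetP [t _ ->] few.
have [i [j [j' EN]]] : exists i j j',
    cnbh cadj (contract t) = contract @: (rowset i :|: colset j :|: colset j').
  have [txy | txy] := boolP (t \in xy).
    by exists (row x), (col x), (col y); rewrite contract_xy // cnbh_contractN.
  by exists (row t), (col t), (col t); rewrite cnbh_contract_rook // -setUA setUid.
rewrite EN in few *; set U := rowset i :|: colset j :|: colset j'.
have few_in (L : {set V}) : L \subset U -> #|contract @: L :\: hit| <= k.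
  by move=> sL; apply: leq_trans few; apply/subset_leq_card/setSD; exact: imsetS.
have [sI sJ sJ'] : [/\ rowset i \subset U, colset j \subset U & colset j' \subset U].
  by split; rewrite /U ?subsetUr // subsetU // ?subsetUl ?subsetUr ?orbT.
have iR : i \in hit_rows.
  by apply: contraTT (few_in _ sI) => /row_unobserved; rewrite ltnNge.
have jC : j \in hit_cols.
  by apply: contraTT (few_in _ sJ) => /col_unobserved; rewrite ltnNge.
have j'C : j' \in hit_cols.
  by apply: contraTT (few_in _ sJ') => /col_unobserved; rewrite ltnNge.
by apply: imsetS; rewrite !subUset rowset_hit ?colset_hit.
Qed.

Lemma unhit_vertex : exists v, v \notin hit.
Proof.
have [i0] : exists i0, i0 \notin hit_rows :|: [set row x].
  apply: exists_notin; apply: leq_ltn_trans (leq_card_setU _ _) _.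
  by rewrite cards1 card_ord; have := card_hit_rows; lia.
have [j0 j0C] : exists j0, j0 \notin hit_cols.
  by apply: exists_notin; rewrite card_ord; have := card_hit_cols; lia.
rewrite in_setU in_set1 negb_or => /andP [i0R i0x]; exists (contract (cell i0 j0)).
by rewrite contract_notin ?cell_nxy // inE row_cell col_cell negb_or i0R.
Qed.

Lemma not_kpds_small : ~ kpds cadj k S.
Proof. by have [v vhit] := unhit_vertex; apply: not_kpds_closed cnbhS_hit pstep_hit vhit. Qed.

End LowerBound.

Section UpperBound.
Variables (i0 : 'I_a) (J : {set 'I_a}).
Hypotheses (i0x : i0 != row x) (Jxy : [disjoint J & [set col x; col y]])
  (ka : k + 2 <= a) (card_J : #|J| = a - k - 2).

Definition dominator : {set cvert x y} := None |: [set contract (cell i0 j) | j in J].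
Local Notation observed := (cnbhS cadj dominator).

Lemma card_dominator : #|dominator| = a - k - 1.
Proof.
rewrite cardsU1 card_in_imset; last first.
  by move=> j j' _ _ /(contract_inj (cell_nxy _ i0x)) /(congr1 col); rewrite !col_cell.
have -> : None \notin [set contract (cell i0 j) | j in J].
  by apply/imsetP => -[j _]; have [s ->] := contract_nxy (cell_nxy j i0x).
by rewrite /= card_J; lia.
Qed.

Lemma cnbhN_observed : cnbh cadj None \subset observed.
Proof. by apply: bigcup_sup; rewrite setU11. Qed.

Lemma colset_observed j : j \in J -> contract @: colset j \subset observed.
Proof.
move=> jJ; apply: subset_trans (bigcup_sup (contract (cell i0 j)) _); last first.
  by rewrite setU1r //; apply/imsetP; exists j.
by rewrite cnbh_contract_rook ?cell_nxy // imsetS // col_cell subsetUr.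
Qed.

Lemma card_unobserved i : i != row x ->
  #|cnbh cadj (contract (cell i (col x))) :\: observed| <= k.
Proof.
move=> ix; set free := ~: (J :|: [set col x; col y]).
have card_free : #|free| = k.
  by rewrite cardC_ord cardsU (disjoint_setI0 Jxy) cards0 cards2 col_xy card_J; lia.
rewrite -card_free -(card_row_cells i free) cnbh_contract_rook ?cell_nxy // row_cell col_cell.
apply: leq_trans (leq_imset_card contract _).
apply/subset_leq_card/subsetP => _ /setDP [/imsetP [t tL ->] tO]; apply: imset_f.
have tNxy : col t \notin [set col x; col y].
  apply: contra tO => ctxy; apply: (subsetP cnbhN_observed); rewrite cnbh_contractN imset_f //.
  by move: ctxy; rewrite !inE => /orP [] ->; rewrite ?orbT.
have tNJ : col t \notin J.
  by apply: contra tO => ctJ; apply: (subsetP (colset_observed ctJ)); rewrite imset_f // inE.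
rewrite inE /free in_setC in_setU negb_or tNJ tNxy !andbT.
case/setUP: tL; rewrite inE // => /eqP ctx.
by rewrite ctx set21 in tNxy.
Qed.

Lemma kpds_dominator : kpds cadj k dominator.
Proof.
have Nobserved : None \in observed by apply: (subsetP cnbhN_observed); rewrite inE eqxx.
exists 1; apply/eqP; rewrite eqEsubset subsetT /=; apply/subsetP => u _.
have [t ->] := contract_surj u; have [tx | tx] := eqVneq (row t) (row x).
  have N_done : #|cnbh cadj None :\: observed| <= k.
    have /eqP -> : cnbh cadj None :\: observed == set0 by rewrite setD_eq0 cnbhN_observed.
    by rewrite cards0.
  apply: (subsetP (cnbh_pstep Nobserved N_done)).
  by rewrite cnbh_contractN imset_f // !inE tx eqxx.
set w := contract (cell (row t) (col x)).
have w_observed : w \in observed.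
  by apply: (subsetP cnbhN_observed); rewrite cnbh_contractN imset_f // !inE col_cell eqxx orbT.
apply: (subsetP (cnbh_pstep w_observed (card_unobserved tx))).
by rewrite cnbh_contract_rook ?cell_nxy // imset_f // !inE row_cell eqxx.
Qed.

End UpperBound.

Lemma exists_dominator : k + 2 <= a -> exists S, kpds cadj k S /\ #|S| = a - k - 1.
Proof.
move=> ka; have [i0] : exists i0, i0 \notin [set row x].
  by apply: exists_notin; rewrite cards1 card_ord; lia.
rewrite in_set1 => i0x.
have [J [JC card_J]] :
    exists J : {set 'I_a}, J \subset ~: [set col x; col y] /\ #|J| = a - k - 2.
  by apply: exists_subset_card; rewrite cardC_ord cards2 col_xy; lia.
have Jxy : [disjoint J & [set col x; col y]] by rewrite disjoints_subset.
by exists (dominator i0 J); split; [apply: kpds_dominator | apply: card_dominator].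
Qed.

End Rook.

Theorem mainTheorem8 (k a : nat) (hk : 0 < k) (ha : k + 2 <= a)
  (x y : 'I_a * 'I_a) (hxy : KaKa_adj x y) :
  is_gammaPk (contract_adj (@KaKa_adj a) x y) k (a - k - 1).
Proof.
have [tr [row_xy col_xy]] : exists tr, row tr x = row tr y /\ col tr x != col tr y.
  by case/orP: hxy => /andP [/eqP e n]; [exists false | exists true].
split; first exact: exists_dominator row_xy col_xy ha.
move=> S kpdsS; rewrite leqNgt; apply/negP => small_S.
exact: (not_kpds_small row_xy col_xy small_S).
Qed.
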